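(* Let $\Gamma$ be a cocompact torsion-free Fuchsian group, $M=\mathbb{D}^2/\Gamma$, and identify $T_pM$ ($p=\pi(0)$) with $\mathbb{D}^2$ as described in the context. Then for every $i\ge1$, $$\sigma_i=\{z\in\mathbb{D}^2 : \upsilon(z)=i-1\},\qquad \mathbb{D}^2=\sigma_1\cup\mathcal{L},$$ and for every $z\in\mathbb{D}^2$, $$\iota(z)=\#\{\lambda\in\Lambda : \lambda\in D(z,r(z))\},$$ where $D(z,r(z))$ is the open hyperbolic disk of center $z$ and radius $r(z)$.
   Context: $\mathbb{D}^2$ is the open unit disk with the Poincaré metric $d$; $r(z)=d(0,z)$. $\pi:\mathbb{D}^2\to M$ is the quotient map and $\Lambda=\{\gamma(0):\gamma\in\Gamma\}$. For $\lambda\in\Lambda\setminus\{0\}$, $L_\lambda=\{z\in\mathbb{D}^2 : d(z,0)=d(z,\lambda)\}$ (the perpendicular bisector geodesic of $0$ and $\lambda$), and the web of geodesics is $\mathcal{L}=\bigcup_{\lambda\in\Lambda\setminus\{0\}}L_\lambda$. For $z\in\mathbb{D}^2$, $\rho(z)$ is the open geodesic segment from $0$ to $z$, $\iota(z)=\#\{\lambda\in\Lambda\setminus\{0\} : L_\lambda\cap\rho(z)\neq\emptyset\}$ and $\upsilon(z)=\#\{\lambda\in\Lambda\setminus\{0\}: z\in L_\lambda\}$. The exponential map $\exp_p:T_pM\to M$ is a covering isomorphic to $\pi$; we identify $T_pM$ with $\mathbb{D}^2$ so that $v\in T_pM$ corresponds to $z\in\mathbb{D}^2$ with $d(0,z)=|v|$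 and $\exp_p(v)=\pi(z)$ (via the hyperbolic exponential map at $0$). Under this identification the focal index of $z$ is $I(z)=\#\{z'\in\mathbb{D}^2 : \pi(z')=\pi(z),\ d(0,z')=d(0,z)\}$, and $\sigma_i=\{z : I(z)=i\}$ (the focal decomposition of $T_pM$). *)

From HB Require Import structures.
From mathcomp Require Import all_boot all_order all_algebra.
From mathcomp Require Import complex.
From mathcomp Require Import boolp classical_sets cardinality reals exp.
Set Implicit Arguments. Unset Strict Implicit. Unset Printing Implicit Defensive.
Import Order.TTheory GRing.Theory Num.Theory.
Local Open Scope ring_scope.
Local Open Scope complex_scope.
Local Open Scope classical_set_scope.

Section Hyp.
Variable R : realType.
Local Notation C := (R[i]).
Local Notation normc := (@ComplexField.Normc.normc R).

Definition inD (z : C) : Prop := normc z < 1.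

(* Poincare distance on the disk (curvature -1):
   d(z,w) = log((1+t)/(1-t)),  t = |z-w| / |1 - conj(w) z| *)
Definition hdist (z w : C) : R :=
  let t := normc (z - w) / normc (1 - w^* * z) in ln ((1 + t) / (1 - t)).

(* SU(1,1): pairs (a,b) standing for the matrix [[a,b],[conj b, conj a]]
   with |a|^2 - |b|^2 = 1; it acts on the disk by Mobius maps. *)
Definition su11 (g : C * C) : Prop := normc g.1 ^+ 2 - normc g.2 ^+ 2 = 1.
Definition mob (g : C * C) (z : C) : C := (g.1 * z + g.2) / (g.2^* * z + g.1^*).
Definition gmul (g h : C * C) : C * C :=
  (g.1 * h.1 + g.2 * h.2^*, g.1 * h.2 + g.2 * h.1^*).
Definition ginv (g : C * C) : C * C := (g.1^*, - g.2).
Definition gone : C * C := (1, 0).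
Definition gmone : C * C := (-1, 0).
Definition gpow (g : C * C) (n : nat) : C * C := iter n (gmul g) gone.

(* A Fuchsian group, given by its full preimage Gam in SU(1,1)
   (so it contains -I), a discrete subgroup of SU(1,1). *)
Definition fuchsian (Gam : set (C * C)) : Prop :=
  (forall g, Gam g -> su11 g) /\
      Gam gone /\ Gam gmone /\
      (forall g h, Gam g -> Gam h -> Gam (gmul g h)) /\
      (forall g, Gam g -> Gam (ginv g)) /\
      (exists2 eps : R, 0 < eps & forall g, Gam g ->
        normc (g.1 - 1) < eps -> normc g.2 < eps -> g = gone).

(* torsion-free: no nontrivial element of finite order in PSU(1,1) *)
Definition torsion_free (Gam : set (C * C)) : Prop :=
  forall g n, Gam g -> (0 < n)%N ->
    (gpow g n = gone \/ gpow g n = gmone) -> g = gone \/ g = gmone.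

(* cocompact: the Gam-translates of some compact set (w.l.o.g. a closed
   hyperbolic disk about 0) cover the disk *)
Definition cocompact (Gam : set (C * C)) : Prop :=
  exists Rad : R, forall z, inD z -> exists2 g, Gam g & hdist 0 (mob g z) <= Rad.

Definition Lambda (Gam : set (C * C)) : set C := [set mob g 0 | g in Gam].

Definition Lbis (lam : C) : set C := [set z | inD z /\ hdist z 0 = hdist z lam].

(* open geodesic segment from 0 to z (a piece of a diameter) *)
Definition rho (z : C) : set C := [set w | exists t : R, 0 < t < 1 /\ w = t%:C * z].

(* sets whose cardinalities are iota(z), upsilon(z), I(z) *)
Definition iota_set (Gam : set (C * C)) (z : C) : set C :=
  [set lam | Lambda Gam lam /\ lam <> 0 /\ (rho z `&` Lbis lam) !=set0].
Definition upsilon_set (Gam : set (C * C)) (z : C) : set C :=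
  [set lam | Lambda Gam lam /\ lam <> 0 /\ Lbis lam z].
Definition focal_set (Gam : set (C * C)) (z : C) : set C :=
  [set z' | inD z' /\ (exists2 g, Gam g & mob g z = z') /\ hdist 0 z' = hdist 0 z].

Definition web (Gam : set (C * C)) : set C :=
  [set z | exists lam, Lambda Gam lam /\ lam <> 0 /\ Lbis lam z].

Definition sigma (Gam : set (C * C)) (i : nat) : set C :=
  [set z | inD z /\ card_eq (focal_set Gam z) `I_i].

End Hyp.

(* A point of the fibre over [pi z] at distance [r z] from 0 is [g z] with [g] in Gam,
   and [d(0, g z) = d(0, z)] says that [z] lies on the bisector [L_lam], [lam = g^-1 0].
   A discrete torsion-free Fuchsian group acts freely on the disk: the elements fixing [z]
   have bounded entries, so by discreteness a positive power of each is the identity, and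
   torsion-freeness makes it trivial. Hence [lam |-> g_lam^-1 z] ([g_lam 0 = lam]) is a
   bijection from the [lam <> 0] with [z] on [L_lam] onto the fibre minus [z], which gives
   [I(z) = upsilon(z) + 1]. For [iota]: [d(w, lam) - d(w, 0)] has the sign of an explicit
   quadratic form, which along [rho z] is a quadratic polynomial in the parameter, positive
   at 0; it vanishes inside the segment iff it is negative at [z], i.e. iff
   [d(z, lam) < d(0, z)]. *)

From HB Require Import structures.
From mathcomp Require Import all_boot all_order all_algebra.
From mathcomp Require Import complex.
From mathcomp Require Import boolp classical_sets cardinality reals exp.
From mathcomp Require Import finmap ring lra.
Import Order.TTheory GRing.Theory Num.Theory.
Set Implicit Arguments. Unset Strict Implicit. Unset Printing Implicit Defensive.
Local Open Scope ring_scope.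
Local Open Scope complex_scope.
Local Open Scope classical_set_scope.

Section SquaredModulus.
Variable R : realType.
Local Notation C := (R[i]).
Local Notation normc := (@ComplexField.Normc.normc R).
Implicit Types x y z w : C.

Definition sqnorm x : R := complex.Re x ^+ 2 + complex.Im x ^+ 2.

Lemma normc_sqrt x : normc x = Num.sqrt (sqnorm x).
Proof. by case: x. Qed.

Lemma sqnorm_ge0 x : 0 <= sqnorm x.
Proof. rewrite /sqnorm; nra. Qed.

Lemma normc_ge0 x : 0 <= normc x.
Proof. by rewrite normc_sqrt sqrtr_ge0. Qed.

Lemma sqr_normcE x : normc x ^+ 2 = sqnorm x.
Proof. by rewrite normc_sqrt sqr_sqrtr ?sqnorm_ge0. Qed.

Lemma sqnormM x y : sqnorm (x * y) = sqnorm x * sqnorm y.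
Proof. by case: x => a b; case: y => c d; rewrite /sqnorm /=; ring. Qed.

Lemma sqnormJ x : sqnorm x^* = sqnorm x.
Proof. by case: x => a b; rewrite /sqnorm /=; ring. Qed.

Lemma sqnormN x : sqnorm (- x) = sqnorm x.
Proof. by case: x => a b; rewrite /sqnorm /=; ring. Qed.

Lemma sqnormZ (s : R) x : sqnorm (s%:C * x) = s ^+ 2 * sqnorm x.
Proof. by case: x => a b; rewrite /sqnorm /=; ring. Qed.

Lemma sqnorm1 : sqnorm 1 = 1.
Proof. by rewrite /sqnorm /=; ring. Qed.

Lemma sqnorm0 : sqnorm 0 = 0.
Proof. by rewrite /sqnorm /=; ring. Qed.

Lemma sqnorm_eq0 x : (sqnorm x == 0) = (x == 0).
Proof.
apply/eqP/eqP => [|->]; last exact: sqnorm0.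
case: x => a b; rewrite /sqnorm /= => h.
have -> : a = 0 by nra.
by have -> : b = 0 by nra.
Qed.

Lemma sqnorm_gt0 x : (0 < sqnorm x) = (x != 0).
Proof. by rewrite lt_neqAle sqnorm_ge0 andbT eq_sym sqnorm_eq0. Qed.

Lemma sqnormV x : sqnorm x^-1 = (sqnorm x)^-1.
Proof.
have [->|x0] := eqVneq x 0; first by rewrite invr0 sqnorm0 invr0.
apply: (@mulfI _ (sqnorm x)); first by rewrite sqnorm_eq0.
by rewrite -sqnormM !mulfV ?sqnorm1 ?sqnorm_eq0.
Qed.

Lemma sqnorm_div x y : sqnorm (x / y) = sqnorm x / sqnorm y.
Proof. by rewrite sqnormM sqnormV. Qed.

Lemma sqnormB_le x y : sqnorm (x - y) <= 2 * (sqnorm x + sqnorm y).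
Proof.
case: x => a b; case: y => c d; rewrite /sqnorm /=.
have := sqr_ge0 (a + c); have := sqr_ge0 (b + d); nra.
Qed.

Lemma normc_lt_sqnorm x (e : R) : 0 < e -> sqnorm x < e ^+ 2 -> normc x < e.
Proof.
move=> e0 h; rewrite normc_sqrt -[e in _ < e]ger0_norm ?ltW // -sqrtr_sqr.
by rewrite ltr_sqrt // exprn_gt0.
Qed.

Lemma inDE z : inD z <-> sqnorm z < 1.
Proof. by rewrite /inD normc_sqrt -[in X in _ < X]sqrtr1 ltr_sqrt. Qed.

Lemma inD0 : inD (0 : C).
Proof. by apply/inDE; rewrite sqnorm0 ltr01. Qed.

End SquaredModulus.

Arguments inD0 {R}.

Section PoincareDistance.
Variable R : realType.
Local Notation C := (R[i]).
Local Notation normc := (@ComplexField.Normc.normc R).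
Implicit Types z w : C.

Definition pdist z w : R := normc (z - w) / normc (1 - w^* * z).
Definition pdist2 z w : R := sqnorm (z - w) / sqnorm (1 - w^* * z).

Lemma hdistE z w : hdist z w = ln ((1 + pdist z w) / (1 - pdist z w)).
Proof. by []. Qed.

Lemma sqr_pdist z w : pdist z w ^+ 2 = pdist2 z w.
Proof. by rewrite /pdist expr_div_n !sqr_normcE. Qed.

Lemma pdist_ge0 z w : 0 <= pdist z w.
Proof. by rewrite divr_ge0 ?normc_ge0. Qed.

Lemma sqnorm_one_sub_conjM z w :
  sqnorm (1 - w^* * z) = sqnorm (z - w) + (1 - sqnorm z) * (1 - sqnorm w).
Proof. by case: z => a b; case: w => c d; rewrite /sqnorm /=; ring. Qed.

Lemma pdist2E z w :
  pdist2 z w = sqnorm (z - w) / (sqnorm (z - w) + (1 - sqnorm z) * (1 - sqnorm w)).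
Proof. by rewrite /pdist2 sqnorm_one_sub_conjM. Qed.

Lemma sqnorm_one_sub_conjM_gt0 z w : inD z -> inD w -> 0 < sqnorm (1 - w^* * z).
Proof.
move=> /inDE hz /inDE hw; rewrite sqnorm_one_sub_conjM.
by have := sqnorm_ge0 (z - w); nra.
Qed.

Lemma pdist2_itv z w : inD z -> inD w -> 0 <= pdist2 z w < 1.
Proof.
move=> hz hw; have hd := sqnorm_one_sub_conjM_gt0 hz hw.
move: (hz) (hw) => /inDE hz' /inDE hw'.
have := sqnorm_one_sub_conjM z w; have := sqnorm_ge0 (z - w).
by rewrite /pdist2 divr_ge0 ?sqnorm_ge0 //= ltr_pdivrMr // mul1r; nra.
Qed.

Lemma pdist_itv z w : inD z -> inD w -> 0 <= pdist z w < 1.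
Proof.
move=> hz hw; have /andP[_] := pdist2_itv hz hw.
by rewrite -sqr_pdist pdist_ge0 /=; have := pdist_ge0 z w; nra.
Qed.

Lemma ler_ln_ratio (s t : R) : 0 <= s < 1 -> 0 <= t < 1 ->
  (ln ((1 + s) / (1 - s)) <= ln ((1 + t) / (1 - t))) = (s <= t).
Proof.
move=> /andP[s0 s1] /andP[t0 t1].
rewrite ler_ln ?posrE ?divr_gt0 ?subr_gt0 //; try lra.
rewrite ler_pdivrMr ?subr_gt0 // mulrAC ler_pdivlMr ?subr_gt0 //.
by apply/idP/idP => h; nra.
Qed.

Lemma hdist_le z w z' w' : inD z -> inD w -> inD z' -> inD w' ->
  (hdist z w <= hdist z' w') = (pdist2 z w <= pdist2 z' w').
Proof.
move=> hz hw hz' hw'; rewrite !hdistE ler_ln_ratio ?pdist_itv // -!sqr_pdist.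
by have := pdist_ge0 z w; have := pdist_ge0 z' w'; move=> ? ?; apply/idP/idP => h; nra.
Qed.

Lemma hdist_lt z w z' w' : inD z -> inD w -> inD z' -> inD w' ->
  (hdist z w < hdist z' w') = (pdist2 z w < pdist2 z' w').
Proof. by move=> hz hw hz' hw'; rewrite !ltNge hdist_le. Qed.

Lemma hdist_eq z w z' w' : inD z -> inD w -> inD z' -> inD w' ->
  hdist z w = hdist z' w' <-> pdist2 z w = pdist2 z' w'.
Proof.
move=> hz hw hz' hw'; split=> h; apply/le_anti.
  by rewrite -!hdist_le // h lexx.
by rewrite !hdist_le // h lexx.
Qed.

Lemma hdistC z w : hdist z w = hdist w z.
Proof.
rewrite !hdistE /pdist -normcN opprB !normc_sqrt.
by congr (ln ((1 + Num.sqrt _ / Num.sqrt _) / (1 - _ / Num.sqrt _)));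
  case: z => a b; case: w => c d; rewrite /sqnorm /=; ring.
Qed.

Lemma pdist2_0r z : pdist2 z 0 = sqnorm z.
Proof. by rewrite pdist2E !subr0 sqnorm0 subr0 mulr1 addrC subrK divr1. Qed.

Lemma pdist2_0l z : pdist2 0 z = sqnorm z.
Proof. by rewrite pdist2E sub0r sqnormN sqnorm0 subr0 mul1r addrC subrK divr1. Qed.

End PoincareDistance.

Section SU11.
Variable R : realType.
Local Notation C := (R[i]).
Implicit Types (z w : C) (g h k : C * C).

Lemma gmulA g h k : gmul g (gmul h k) = gmul (gmul g h) k.
Proof.
case: g => [[? ?] [? ?]]; case: h => [[? ?] [? ?]]; case: k => [[? ?] [? ?]].
by congr (_, _); congr (_ +i* _); rewrite /=; ring.
Qed.

Lemma gmul1g g : gmul (gone R) g = g.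
Proof. by case: g => [[? ?] [? ?]]; congr (_, _); congr (_ +i* _); rewrite /=; ring. Qed.

Lemma su11E g : su11 g <-> sqnorm g.1 - sqnorm g.2 = 1.
Proof. by rewrite /su11 !sqr_normcE. Qed.

Lemma gmulVg g : su11 g -> gmul (ginv g) g = gone R.
Proof.
move/su11E; case: g => [[? ?] [? ?]]; rewrite /sqnorm /= => det.
by congr (_, _); congr (_ +i* _); rewrite -?det; ring.
Qed.

Lemma gmulgV g : su11 g -> gmul g (ginv g) = gone R.
Proof.
move/su11E; case: g => [[? ?] [? ?]]; rewrite /sqnorm /= => det.
by congr (_, _); congr (_ +i* _); rewrite -?det; ring.
Qed.

Lemma su11_ginv g : su11 g -> su11 (ginv g).
Proof.
rewrite !su11E; case: g => [[? ?] [? ?]]; rewrite /sqnorm /= => <-; ring.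
Qed.

Lemma su11_gmul g h : su11 g -> su11 h -> su11 (gmul g h).
Proof.
rewrite !su11E; case: g => [[a1 a2] [b1 b2]]; case: h => [[c1 c2] [d1 d2]].
rewrite /sqnorm /= => detg deth.
transitivity ((a1 ^+ 2 + a2 ^+ 2 - (b1 ^+ 2 + b2 ^+ 2)) *
              (c1 ^+ 2 + c2 ^+ 2 - (d1 ^+ 2 + d2 ^+ 2))); first ring.
by rewrite detg deth mulr1.
Qed.

Definition mob_num g z := g.1 * z + g.2.
Definition mob_den g z := g.2^* * z + g.1^*.

Lemma su11_conj g : su11 g -> g.1 * g.1^* - g.2 * g.2^* = 1.
Proof.
move/su11E; case: g => [[? ?] [? ?]]; rewrite /sqnorm /= => det.
by congr (_ +i* _); rewrite -?det; ring.
Qed.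

Lemma sqnorm_mob_denB g z : su11 g ->
  sqnorm (mob_den g z) - sqnorm (mob_num g z) = 1 - sqnorm z.
Proof.
move/su11E => det; rewrite -[RHS]mul1r -{1}det.
by case: g {det} => [[? ?] [? ?]]; case: z => ? ?; rewrite /sqnorm /=; ring.
Qed.

Lemma sqnorm_mob_den_gt0 g z : su11 g -> inD z -> 0 < sqnorm (mob_den g z).
Proof.
move=> hg /inDE hz; have := sqnorm_mob_denB z hg.
by have := sqnorm_ge0 (mob_num g z); lra.
Qed.

Lemma mob_den_neq0 g z : su11 g -> inD z -> mob_den g z != 0.
Proof. by move=> hg hz; rewrite -sqnorm_gt0 sqnorm_mob_den_gt0. Qed.

Lemma one_sub_sqnorm_mob g z : su11 g -> inD z ->
  1 - sqnorm (mob g z) = (1 - sqnorm z) / sqnorm (mob_den g z).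
Proof.
move=> hg hz; have := sqnorm_mob_den_gt0 hg hz; rewrite lt0r => /andP[hd _].
by rewrite sqnorm_div -(sqnorm_mob_denB z hg); field.
Qed.

Lemma mob_inD g z : su11 g -> inD z -> inD (mob g z).
Proof.
move=> hg hz; have hd := sqnorm_mob_den_gt0 hg hz.
move: (hz) => /inDE hz'; apply/inDE; rewrite -subr_gt0 one_sub_sqnorm_mob //.
by rewrite divr_gt0 // subr_gt0.
Qed.

Lemma mobB g z w : su11 g -> inD z -> inD w ->
  mob g z - mob g w = (z - w) / (mob_den g z * mob_den g w).
Proof.
move=> hg hz hw; have dz := mob_den_neq0 hg hz; have dw := mob_den_neq0 hg hw.
rewrite -[z - w]mul1r -(su11_conj hg).
by move: dz dw; rewrite /mob /mob_den => dz dw; field; rewrite dz dw.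
Qed.

Lemma pdist2_mob g z w : su11 g -> inD z -> inD w ->
  pdist2 (mob g z) (mob g w) = pdist2 z w.
Proof.
move=> hg hz hw; rewrite !pdist2E mobB // sqnorm_div sqnormM !one_sub_sqnorm_mob //.
have dz := sqnorm_mob_den_gt0 hg hz; have dw := sqnorm_mob_den_gt0 hg hw.
move: (hz) (hw) => /inDE hz' /inDE hw'; have := sqnorm_ge0 (z - w) => d0.
have hs : sqnorm (z - w) + (1 - sqnorm z) * (1 - sqnorm w) != 0.
  by rewrite lt0r_neq0 //; nra.
by field; rewrite hs !lt0r_neq0.
Qed.

Lemma hdist_mob g z w : su11 g -> inD z -> inD w ->
  hdist (mob g z) (mob g w) = hdist z w.
Proof.
by move=> hg hz hw; apply/hdist_eq; rewrite ?pdist2_mob //; apply: mob_inD.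
Qed.

Lemma mob1 z : mob (gone R) z = z.
Proof.
rewrite /mob /=; have -> : 0^* * z + 1^* = 1 :> C.
  by case: z => ? ?; congr (_ +i* _); rewrite /=; ring.
by rewrite divr1 mul1r addr0.
Qed.

Lemma mobN1 z : mob (gmone R) z = z.
Proof.
rewrite /mob /=; have -> : 0^* * z + (-1)^* = -1 :> C.
  by case: z => ? ?; congr (_ +i* _); rewrite /=; ring.
by rewrite addr0 invrN invr1 mulrN1 mulN1r opprK.
Qed.

Lemma mobM g h z : su11 g -> su11 h -> inD z -> mob (gmul g h) z = mob g (mob h z).
Proof.
move=> hg hh hz; have dh := mob_den_neq0 hh hz.
have dgh := mob_den_neq0 hg (mob_inD hh hz).
have en : mob_num (gmul g h) z = g.1 * mob_num h z + g.2 * mob_den h z.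
  by case: g {hg dgh} => [[? ?] [? ?]]; case: h {hh dh} => [[? ?] [? ?]];
    case: z {hz} => ? ?; congr (_ +i* _); rewrite /=; ring.
have ed : mob_den (gmul g h) z = g.2^* * mob_num h z + g.1^* * mob_den h z.
  by case: g {hg dgh en} => [[? ?] [? ?]]; case: h {hh dh} => [[? ?] [? ?]];
    case: z {hz} => ? ?; congr (_ +i* _); rewrite /=; ring.
have ed' : mob_den (gmul g h) z = mob_den g (mob h z) * mob_den h z.
  by rewrite ed /mob_num /mob_den /mob; move: dh; rewrite /mob_den => dh; field.
have dgh' : mob_den (gmul g h) z != 0 by rewrite ed' mulf_neq0.
move: (en) (ed) dgh' dgh dh; rewrite /mob /mob_num /mob_den => -> -> dgh' dgh dh.
by field; rewrite dh dgh'.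
Qed.

Lemma mobK g z : su11 g -> inD z -> mob (ginv g) (mob g z) = z.
Proof. by move=> hg hz; rewrite -(mobM (su11_ginv hg) hg hz) gmulVg // mob1. Qed.

Lemma mobVK g z : su11 g -> inD z -> mob g (mob (ginv g) z) = z.
Proof. by move=> hg hz; rewrite -(mobM hg (su11_ginv hg) hz) gmulgV // mob1. Qed.

End SU11.

Section QuadraticAt1.
Variable R : realFieldType.

Lemma quadratic_lt0_at1 (n L p s : R) : 0 <= n < 1 -> 0 < L -> 0 < s < 1 ->
  s ^+ 2 * (n * L) - 2 * s * p + L = 0 -> n * L - 2 * p + L < 0.
Proof.
move=> /andP[n0 n1] L0 /andP[s0 s1] root.
have e : s * (n * L - 2 * p + L) = - (L * (1 - s) * (1 - s * n)) by nra.
have : 0 < L * (1 - s) * (1 - s * n) by rewrite !mulr_gt0 // subr_gt0; nra.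
by nra.
Qed.

End QuadraticAt1.

Section QuadraticRoot.
Variable R : rcfType.

(* The witness is the smaller root [L / (p + sqrt (p^2 - a L))]. *)
Lemma quadratic_root01 (a L p : R) : 0 <= a -> 0 < L -> a - 2 * p + L < 0 ->
  exists s, 0 < s < 1 /\ s ^+ 2 * a - 2 * s * p + L = 0.
Proof.
move=> a0 L0 neg.
have disc : 0 <= p ^+ 2 - a * L.
  have : (a + L) * (a + L) < (2 * p) * (2 * p) by apply: ltr_pM; lra.
  by have := sqr_ge0 (a - L); nra.
set sq := Num.sqrt (p ^+ 2 - a * L).
have sq2 : sq ^+ 2 = p ^+ 2 - a * L by rewrite sqr_sqrtr.
have sq0 : 0 <= sq by apply: sqrtr_ge0.
have den0 : 0 < p + sq by nra.
exists (L / (p + sq)); split.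
  rewrite divr_gt0 //= ltr_pdivrMr // mul1r.
  have [|lt] := lerP sq (L - p); last by lra.
  by move=> le; have := ler_pM sq0 sq0 le le; nra.
apply: (@mulIf _ ((p + sq) ^+ 2)); first by rewrite expf_neq0 // lt0r_neq0.
rewrite mul0r; transitivity (L * (L * a - p ^+ 2 + sq ^+ 2)).
  by field; rewrite lt0r_neq0.
by rewrite sq2; ring.
Qed.

End QuadraticRoot.

Section Bisectors.
Variable R : realType.
Local Notation C := (R[i]).
Implicit Types (z w lam : C).

Definition bisector_form lam w : R := sqnorm w * sqnorm lam
  - 2 * (complex.Re lam * complex.Re w + complex.Im lam * complex.Im w) + sqnorm lam.

Lemma bisector_formZ lam z (s : R) : bisector_form lam (s%:C * z) =
  s ^+ 2 * (sqnorm z * sqnorm lam)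
  - 2 * s * (complex.Re lam * complex.Re z + complex.Im lam * complex.Im z) + sqnorm lam.
Proof. by case: z => ? ?; case: lam => ? ?; rewrite /bisector_form /sqnorm /=; ring. Qed.

Lemma pdist2_subr0 w lam : inD w -> inD lam ->
  pdist2 w lam - pdist2 w 0 =
  (1 - sqnorm w) * bisector_form lam w / sqnorm (1 - lam^* * w).
Proof.
move=> hw hl; have := sqnorm_one_sub_conjM_gt0 hw hl; rewrite lt0r => /andP[hd _].
rewrite pdist2_0r /pdist2.
have e : sqnorm (w - lam) = bisector_form lam w + sqnorm w * (1 - sqnorm lam).
  by case: w {hw hd} => ? ?; case: lam {hl} => ? ?; rewrite /bisector_form /sqnorm /=; ring.
by move: hd; rewrite sqnorm_one_sub_conjM e => hd; field.
Qed.

Lemma hdist_eq_bisector_form w lam : inD w -> inD lam ->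
  hdist w 0 = hdist w lam <-> bisector_form lam w = 0.
Proof.
move=> hw hl; rewrite (hdist_eq hw inD0 hw hl).
have hd := sqnorm_one_sub_conjM_gt0 hw hl; move: (hw) => /inDE hw'.
have e := pdist2_subr0 hw hl.
split=> [h|h]; last by apply/eqP; rewrite eq_sym -subr_eq0 e h mulr0 mul0r.
move: e; rewrite -h subrr => /esym/eqP.
by rewrite !mulf_eq0 invr_eq0 (gt_eqF hd) orbF => /orP[] /eqP //; lra.
Qed.

Lemma hdist_lt_bisector_form z lam : inD z -> inD lam ->
  hdist z lam < hdist 0 z <-> bisector_form lam z < 0.
Proof.
move=> hz hl; rewrite (hdistC 0 z) (hdist_lt hz hl hz inD0) -subr_lt0 pdist2_subr0 //.
have hd := sqnorm_one_sub_conjM_gt0 hz hl; move: (hz) => /inDE hz'.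
by rewrite mulrAC pmulr_rlt0 // divr_gt0 // subr_gt0.
Qed.

(* [s |-> bisector_form lam (s z)] is a quadratic equal to [|lam|^2] at [s = 0]: it has a
   root in (0, 1) iff it is negative at [s = 1]. *)
Lemma rho_meets_Lbis z lam : inD z -> inD lam ->
  (lam <> 0 /\ (rho z `&` Lbis lam) !=set0) <-> hdist z lam < hdist 0 z.
Proof.
move=> hz hl; rewrite hdist_lt_bisector_form //; move: (hz) => /inDE hz'.
have n0 := sqnorm_ge0 z.
split=> [[/eqP l0 [_ [[s [s01 ->]] [hw /(hdist_eq_bisector_form hw hl)]]]]|neg].
  rewrite bisector_formZ => root.
  by apply: (quadratic_lt0_at1 _ _ s01 root); rewrite ?n0 ?sqnorm_gt0.
have l0 : lam != 0.
  by apply: contraTneq neg => ->; rewrite /bisector_form sqnorm0 /=; lra.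
have L0 : 0 < sqnorm lam by rewrite sqnorm_gt0.
have [s [/andP[s0 s1] root]] := @quadratic_root01 _ (sqnorm z * sqnorm lam)
  (sqnorm lam) (complex.Re lam * complex.Re z + complex.Im lam * complex.Im z)
  (mulr_ge0 n0 (ltW L0)) L0 neg.
have hw : inD (s%:C * z) by apply/inDE; rewrite sqnormZ; nra.
split; first exact/eqP.
exists (s%:C * z); split; first by exists s; rewrite s0 s1.
by split=> //; apply/(hdist_eq_bisector_form hw hl); rewrite bisector_formZ.
Qed.

End Bisectors.

Lemma pigeonhole_nat (T : finType) (f : nat -> T) : exists i j, (i < j)%N /\ f i = f j.
Proof.
pose F (k : 'I_#|T|.+1) := f k.
have /injectivePn[i [j neq_ij eq_f]] : ~~ injectiveb F.
  by apply/injectiveP => /leq_card; rewrite card_ord ltnn.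
have [lt|gt|eq] := ltngtP i j; [by exists i, j | by exists j, i |].
by rewrite (val_inj eq) eqxx in neq_ij.
Qed.

Section Grid.
Variable R : archiRealFieldType.

Lemma grid_cell_close (K : nat) (B h c c' : R) : 0 < h -> 2 * B < h * K.+1%:R ->
  `|c| <= B -> `|c'| <= B ->
  (inord (Num.truncn ((c + B) / h)) : 'I_K.+1) = inord (Num.truncn ((c' + B) / h)) ->
  `|c - c'| < h.
Proof.
move=> h0 hK; rewrite !ler_norml => /andP[c0 c1] /andP[c0' c1'] same_cell.
set x := (c + B) / h; set x' := (c' + B) / h.
have x0 : 0 <= x by rewrite divr_ge0 //; lra.
have x0' : 0 <= x' by rewrite divr_ge0 //; lra.
have xK : x < K.+1%:R by rewrite ltr_pdivrMr //; nra.
have xK' : x' < K.+1%:R by rewrite ltr_pdivrMr //; nra.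
have := congr1 val same_cell; rewrite /= !inordK ?ltnS ?truncn_le_nat // => e.
have := truncn_itv x0; have := truncn_itv x0'; rewrite e.
set N := (Num.truncn x')%:R => /andP[a1 a2] /andP[a3 a4].
have -> : c - c' = (x - x') * h by rewrite mulrBl !divfK ?lt0r_neq0 //; ring.
by rewrite normrM (gtr0_norm h0) gtr_pMl // ltr_norml; apply/andP; split; lra.
Qed.

End Grid.

Section Powers.
Variable R : realType.
Local Notation C := (R[i]).
Implicit Types (z : C) (g : C * C).

Lemma gpowD g m n : gpow g (m + n) = gmul (gpow g m) (gpow g n).
Proof. by elim: m => [|m IH]; rewrite ?gmul1g // addSn /= IH gmulA. Qed.

Lemma mob_gpow_fixed g z n : su11 g -> inD z -> mob g z = z -> mob (gpow g n) z = z.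
Proof.
move=> hg hz fix_z; have su n' : su11 (gpow g n').
  by elim: n' => [|n' IH]; [rewrite su11E /= sqnorm1 sqnorm0 subr0 | exact: su11_gmul].
by elim: n => [|n IH]; rewrite /= ?mob1 // mobM ?su // IH.
Qed.

End Powers.

Section StabilizerBound.
Variable R : realType.
Local Notation C := (R[i]).
Local Notation normc := (@ComplexField.Normc.normc R).
Implicit Types (x z w : C) (g P Q : C * C).

Lemma normc_one_subr_ge x : 1 - normc x <= normc (1 - x).
Proof.
have := le_normcD (1 - x) x; rewrite subrK normc_sqrt sqnorm1 sqrtr1; lra.
Qed.

Lemma normc_conj x : normc x^* = normc x.
Proof. by rewrite !normc_sqrt sqnormJ. Qed.

Lemma normc_conjM_le z w : inD w -> normc (z^* * w) <= normc z.
Proof.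
move=> w1; rewrite ComplexField.Normc.normcM normc_conj.
by have := normc_ge0 z; have := normc_ge0 w; move: w1; rewrite /inD; nra.
Qed.

Lemma sqnorm_one_sub_conjM_equidistant z w : inD z -> inD w ->
  pdist2 w z = sqnorm z -> sqnorm (1 - z^* * w) = 1 - sqnorm w.
Proof.
move=> /inDE hz /inDE hw; rewrite pdist2E => e.
have D0 : sqnorm (w - z) + (1 - sqnorm w) * (1 - sqnorm z) != 0.
  by apply: lt0r_neq0; have := sqnorm_ge0 (w - z); nra.
move/(congr1 (fun t => t * (sqnorm (w - z) + (1 - sqnorm w) * (1 - sqnorm z)))): e.
rewrite /= divfK // => e.
have A : sqnorm (w - z) = sqnorm z * (1 - sqnorm w).
  by apply: (@mulIf _ (1 - sqnorm z)); [rewrite lt0r_neq0 // subr_gt0 | lra].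
by rewrite sqnorm_one_sub_conjM A; ring.
Qed.

Lemma stabilizer_coef_bound g z : su11 g -> inD z -> mob g z = z ->
  sqnorm g.1 <= ((1 - normc z) ^+ 2)^-1.
Proof.
move=> hg hz fix_z; have hz0 : inD (0 : C) := inD0.
have one_sub_w : 1 - sqnorm (mob g 0) = (sqnorm g.1)^-1.
  by rewrite one_sub_sqnorm_mob // sqnorm0 subr0 /mob_den mulr0 add0r sqnormJ div1r.
have hw : inD (mob g 0) := mob_inD hg hz0.
have den_w : sqnorm (1 - z^* * mob g 0) = (sqnorm g.1)^-1.
  rewrite -one_sub_w sqnorm_one_sub_conjM_equidistant //.
  by rewrite -{1}fix_z pdist2_mob // pdist2_0l.
set w := mob g 0 in hw den_w *.
have z1 : normc z < 1 := hz; have z0 := normc_ge0 z.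
have lb : (1 - normc z) ^+ 2 <= (sqnorm g.1)^-1.
  rewrite -den_w -sqr_normcE.
  have := normc_one_subr_ge (z^* * w); have := normc_conjM_le z hw.
  by have := normc_ge0 (1 - z^* * w); nra.
have g1 : 0 < sqnorm g.1.
  by move/su11E: hg; have := sqnorm_ge0 g.2; lra.
rewrite -[sqnorm g.1]invrK ler_pV2 ?inE ?unitfE ?invr_gt0 ?exprn_gt0 ?subr_gt0 //.
  by rewrite invr_eq0 gt_eqF.
by rewrite andbT expf_neq0 // gt_eqF // subr_gt0.
Qed.

Lemma gmul_ginv_sub1 P Q : su11 P ->
  (gmul (ginv P) Q).1 - 1 = P.1^* * (Q.1 - P.1) - P.2 * (Q.2 - P.2)^*.
Proof.
move/su11E; case: P => [[? ?] [? ?]]; case: Q => [[? ?] [? ?]].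
by rewrite /sqnorm /= => det; congr (_ +i* _); rewrite -?det; ring.
Qed.

Lemma gmul_ginv2 P Q : su11 P ->
  (gmul (ginv P) Q).2 = P.1^* * (Q.2 - P.2) - P.2 * (Q.1 - P.1)^*.
Proof.
move/su11E; case: P => [[? ?] [? ?]]; case: Q => [[? ?] [? ?]].
by rewrite /sqnorm /= => det; congr (_ +i* _); ring.
Qed.

Lemma sqnormB_lt_coords x y (h : R) : `|complex.Re x - complex.Re y| < h ->
  `|complex.Im x - complex.Im y| < h -> sqnorm (x - y) < 2 * h ^+ 2.
Proof.
case: x => a b; case: y => c d; rewrite /sqnorm /= !ltr_norml.
by move=> /andP[? ?] /andP[? ?]; nra.
Qed.

Lemma sqnorm_coords_le x (B : R) : 1 <= B -> sqnorm x <= B ->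
  `|complex.Re x| <= B /\ `|complex.Im x| <= B.
Proof.
case: x => a b B1; rewrite /sqnorm /= => hx.
by rewrite !ler_norml; split; apply/andP; split; nra.
Qed.

Lemma gmul_ginv_near1 P Q (B d : R) : su11 P -> sqnorm P.1 <= B -> sqnorm P.2 <= B ->
  sqnorm (Q.1 - P.1) < d -> sqnorm (Q.2 - P.2) < d ->
  sqnorm ((gmul (ginv P) Q).1 - 1) < 4 * B * d /\ sqnorm (gmul (ginv P) Q).2 < 4 * B * d.
Proof.
move=> sP P1 P2 d1 d2; rewrite gmul_ginv_sub1 // gmul_ginv2 //.
have := su11E P; case=> /(_ sP) det _; have := sqnorm_ge0 P.1; have := sqnorm_ge0 P.2.
have := sqnorm_ge0 (Q.1 - P.1); have := sqnorm_ge0 (Q.2 - P.2) => ? ? ? ?.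
by split; apply: (le_lt_trans (sqnormB_le _ _)); rewrite !sqnormM !sqnormJ; nra.
Qed.

(* Pigeonhole on a grid of mesh [h] in each of the four real coordinates. *)
Lemma bounded_pairs_close (u : nat -> C * C) (B h : R) : 1 <= B -> 0 < h ->
  (forall n, sqnorm (u n).1 <= B /\ sqnorm (u n).2 <= B) ->
  exists i j, [/\ (i < j)%N, sqnorm ((u j).1 - (u i).1) < 2 * h ^+ 2
                  & sqnorm ((u j).2 - (u i).2) < 2 * h ^+ 2].
Proof.
move=> B1 h0 ub; set K := Num.truncn (2 * B / h).
have hK : 2 * B < h * K.+1%:R by rewrite [h * _]mulrC -ltr_pdivrMr //; exact: truncnS_gt.
pose cell c : 'I_K.+1 := inord (Num.truncn ((c + B) / h)).
have near x y : sqnorm x <= B -> sqnorm y <= B ->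
    cell (complex.Re x) = cell (complex.Re y) -> cell (complex.Im x) = cell (complex.Im y) ->
    sqnorm (x - y) < 2 * h ^+ 2.
  move=> /(sqnorm_coords_le B1)[rx ix] /(sqnorm_coords_le B1)[ry iy] er ei.
  by apply: sqnormB_lt_coords; apply: (grid_cell_close h0 hK).
pose f n := (cell (complex.Re (u n).1), cell (complex.Im (u n).1),
             cell (complex.Re (u n).2), cell (complex.Im (u n).2)).
have [i [j [lt_ij [e1 e2 e3 e4]]]] := pigeonhole_nat f.
have [ui1 ui2] := ub i; have [uj1 uj2] := ub j.
by exists i, j; split=> //; apply: near; rewrite ?e1 ?e2 ?e3 ?e4.
Qed.

End StabilizerBound.

Lemma card_eq_setD1 (T : choiceType) (A : set T) (x : T) n :
  A x -> (A #= `I_n.+1)%card <-> (A `\ x #= `I_n)%card.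
Proof.
move=> Ax; split=> [An1|]; last by move=> h; apply/eq_cardSP; exists x.
have finA : finite_set A by apply/finite_setP; exists n.+1.
apply/(fcard_eq (finite_setD _ finA) (finite_II n)).
rewrite fset_setD1 // (card_fset_set (card_eqxx `I_n)).
have xA : x \in fset_set A by rewrite in_fset_set // in_setE.
by have := cardfsD1 x (fset_set A); rewrite xA (card_fset_set An1) add1n => -[].
Qed.

Section FuchsianGroup.
Variable R : realType.
Local Notation C := (R[i]).
Local Notation normc := (@ComplexField.Normc.normc R).
Implicit Types (z w : C) (g : C * C).
Variable Gam : set (C * C).
Hypothesis fuchsian_Gam : fuchsian Gam.

Lemma fuchsian_su11 g : Gam g -> su11 g.
Proof. by have [su _] := fuchsian_Gam; apply: su. Qed.

Lemma fuchsian_inv g : Gam g -> Gam (ginv g).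
Proof. by have [_ [_ [_ [_ [GV _]]]]] := fuchsian_Gam; apply: GV. Qed.

Lemma fuchsian_mul g h : Gam g -> Gam h -> Gam (gmul g h).
Proof. by have [_ [_ [_ [GM _]]]] := fuchsian_Gam; apply: GM. Qed.

Lemma Lambda_inD lam : Lambda Gam lam -> inD lam.
Proof. by case=> g Gg <-; apply: mob_inD inD0; apply: fuchsian_su11. Qed.

Lemma iota_setE z : inD z ->
  iota_set Gam z = [set lam | Lambda Gam lam /\ hdist z lam < hdist 0 z].
Proof.
move=> hz; apply/seteqP; split=> lam.
  by move=> [hl meets]; split=> //; apply/(rho_meets_Lbis hz (Lambda_inD hl)).
by move=> [hl lt]; split=> //; apply/(rho_meets_Lbis hz (Lambda_inD hl)).
Qed.

Lemma fuchsian_one : Gam (gone R).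
Proof. by have [_ [G1 _]] := fuchsian_Gam. Qed.

Lemma fuchsian_gpow g n : Gam g -> Gam (gpow g n).
Proof. by move=> Gg; elim: n => [|n IH] /=; [exact: fuchsian_one | exact: fuchsian_mul]. Qed.

(* The powers of [g] stay in a compact part of SU(1,1), so two of them are close;
   their quotient is a power of [g] close to the identity, hence the identity. *)
Lemma stabilizer_finite_order g z : Gam g -> inD z -> mob g z = z ->
  exists2 n, (0 < n)%N & gpow g n = gone R.
Proof.
move=> Gg hz fix_z.
have [_ [_ [_ [_ [_ [eps eps0 discrete]]]]]] := fuchsian_Gam.
set B := ((1 - normc z) ^+ 2)^-1.
have B1 : 1 <= B.
  have z1 : normc z < 1 := hz; have := normc_ge0 z => z0.
  by rewrite /B invr_ge1 ?unitfE ?expf_neq0 ?gt_eqF ?subr_gt0 //; nra.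
pose p n := gpow g n.
have pG n : Gam (p n) := fuchsian_gpow n Gg.
have pb1 n : sqnorm (p n).1 <= B.
  apply: (stabilizer_coef_bound (fuchsian_su11 (pG n)) hz).
  exact: mob_gpow_fixed (fuchsian_su11 Gg) hz fix_z.
have pb2 n : sqnorm (p n).2 <= B.
  have := pb1 n; move/su11E: (fuchsian_su11 (pG n)).
  by have := sqnorm_ge0 (p n).2; lra.
set h := eps / (4 * B).
have h0 : 0 < h by rewrite divr_gt0 //; lra.
have small : 4 * B * (2 * h ^+ 2) < eps ^+ 2.
  have -> : 4 * B * (2 * h ^+ 2) = eps ^+ 2 / (2 * B).
    by rewrite /h; field; rewrite gt_eqF //; lra.
  by rewrite ltr_pdivrMr ?exprn_gt0 //; nra.
have [i [j [lt_ij d1 d2]]] := bounded_pairs_close B1 h0 (fun n => conj (pb1 n) (pb2 n)).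
have eq_q : gmul (ginv (p i)) (p j) = p (j - i)%N.
  rewrite /p -{1}(subnKC (ltnW lt_ij)) gpowD gmulA gmulVg ?gmul1g //.
  exact: fuchsian_su11.
have [q1 q2] := gmul_ginv_near1 (fuchsian_su11 (pG i)) (pb1 i) (pb2 i) d1 d2.
exists (j - i)%N; first by rewrite subn_gt0.
rewrite -/(p _) -eq_q; apply: discrete; first by rewrite eq_q.
  by apply: normc_lt_sqnorm => //; apply: lt_trans q1 small.
by apply: normc_lt_sqnorm => //; apply: lt_trans q2 small.
Qed.

Hypothesis torsion_free_Gam : torsion_free Gam.

Lemma stabilizer_trivial g z : Gam g -> inD z -> mob g z = z -> forall w, mob g w = w.
Proof.
move=> Gg hz fix_z w; have [n n0 gn1] := stabilizer_finite_order Gg hz fix_z.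
by case: (torsion_free_Gam Gg n0 (or_introl gn1)) => ->; rewrite ?mob1 ?mobN1.
Qed.

(* [gone R] is a junk value for [lam] outside [Lambda Gam]. *)
Definition orbit_rep lam : C * C := xget (gone R) [set g | Gam g /\ mob g 0 = lam].

Lemma orbit_repP lam : Lambda Gam lam -> Gam (orbit_rep lam) /\ mob (orbit_rep lam) 0 = lam.
Proof.
case=> g Gg e; rewrite /orbit_rep.
by apply: (xgetPex (gone R) (P := [set g | Gam g /\ mob g 0 = lam])); exists g.
Qed.

Definition focal_point z lam := mob (ginv (orbit_rep lam)) z.

Section AtPoint.
Variable z : C.
Hypothesis hz : inD z.

Lemma focal_point_in lam : upsilon_set Gam z lam -> (focal_set Gam z `\ z) (focal_point z lam).
Proof.
move=> [hl [l0 [_ Lz]]]; have [Gh eh] := orbit_repP hl.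
set h := orbit_rep lam in Gh eh *; have sh := fuchsian_su11 Gh.
have hw : inD (focal_point z lam) := mob_inD (su11_ginv sh) hz.
split; last first.
  move=> /= fixz; apply: l0; rewrite -eh.
  by rewrite -{2}(mobK sh inD0) (stabilizer_trivial (fuchsian_inv Gh) hz fixz).
split=> //; split; first by exists (ginv h) => //; apply: fuchsian_inv.
rewrite -(hdist_mob sh inD0 hw) /focal_point -/h mobVK // eh.
by rewrite hdistC -Lz hdistC.
Qed.

Lemma focal_point_inj : {in upsilon_set Gam z &, injective (focal_point z)}.
Proof.
move=> lam mu; rewrite !in_setE => -[hl _] [hm _] eq_fp.
have [Gh eh] := orbit_repP hl; have [Gk ek] := orbit_repP hm.
set h := orbit_rep lam in Gh eh eq_fp *; set k := orbit_rep mu in Gk ek eq_fp *.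
have sh := fuchsian_su11 Gh; have sk := fuchsian_su11 Gk.
have fixz : mob (gmul k (ginv h)) z = z.
  by rewrite (mobM sk (su11_ginv sh) hz) -[mob (ginv h) z]/(focal_point z lam) eq_fp mobVK.
have := stabilizer_trivial (fuchsian_mul Gk (fuchsian_inv Gh)) hz fixz (mob h 0).
by rewrite (mobM sk (su11_ginv sh) (mob_inD sh inD0)) (mobK sh inD0) eh ek.
Qed.

Lemma focal_point_onto z' : (focal_set Gam z `\ z) z' ->
  exists2 lam, upsilon_set Gam z lam & focal_point z lam = z'.
Proof.
move=> [[hz' [[g Gg gz] dz']] z'z]; have sg := fuchsian_su11 Gg.
set lam := mob (ginv g) 0.
have hl : Lambda Gam lam by exists (ginv g) => //; apply: fuchsian_inv.
have l0 : lam <> 0.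
  move=> g0; apply: z'z.
  by have := stabilizer_trivial (fuchsian_inv Gg) inD0 g0 (mob g z); rewrite mobK // gz => ->.
exists lam.
  do 3 split=> //; rewrite -(hdist_mob sg hz (Lambda_inD hl)) /lam (mobVK sg inD0) gz.
  by rewrite hdistC -dz' hdistC.
have [Gh eh] := orbit_repP hl; set h := orbit_rep lam in Gh eh *.
have sh := fuchsian_su11 Gh.
have fix0 : mob (gmul g h) 0 = 0 by rewrite (mobM sg sh inD0) eh /lam (mobVK sg inD0).
rewrite /focal_point -/h -gz -{2}(mobVK sh hz).
by rewrite -(mobM sg sh (mob_inD (su11_ginv sh) hz)) (stabilizer_trivial (fuchsian_mul Gg Gh) inD0 fix0).
Qed.

Lemma focal_setD1E : focal_set Gam z `\ z = focal_point z @` upsilon_set Gam z.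
Proof.
apply/seteqP; split=> [x /focal_point_onto[lam hl <-]|_ [lam hl <-]].
  by exists lam.
exact: focal_point_in.
Qed.

Lemma focal_set_self : focal_set Gam z z.
Proof. by do 2 split=> //; exists (gone R); [exact: fuchsian_one | exact: mob1]. Qed.

Lemma card_focal_set n : (focal_set Gam z #= `I_n.+1)%card <-> (upsilon_set Gam z #= `I_n)%card.
Proof.
rewrite (card_eq_setD1 n focal_set_self) focal_setD1E.
have e := inj_card_eq focal_point_inj.
by split=> h; [apply: card_eq_trans (card_esym e) h | apply: card_eq_trans e h].
Qed.

End AtPoint.

End FuchsianGroup.

Theorem lemma1 (R : realType) (Gam : set (R[i] * R[i])) :
  fuchsian Gam -> torsion_free Gam -> cocompact Gam ->
  [/\ (forall i : nat, (1 <= i)%N ->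
         sigma Gam i = [set z | inD z /\ card_eq (upsilon_set Gam z) `I_(i - 1)]),
      [set z | inD z] = sigma Gam 1 `|` web Gam &
      (forall z, inD z ->
         card_eq (iota_set Gam z) [set lam | Lambda Gam lam /\ hdist z lam < hdist 0 z])].
Proof.
move=> hF htf _.
have sigmaE i : (1 <= i)%N ->
    sigma Gam i = [set z | inD z /\ card_eq (upsilon_set Gam z) `I_(i - 1)].
  case: i => [//|n] _; rewrite subn1 /=; apply/seteqP.
  by split=> z [hz h]; split=> //; apply/(card_focal_set hF htf hz).
split=> //; last by move=> z hz; rewrite iota_setE //; apply: card_eqxx.
apply/seteqP; split=> [z hz|z [[]|[lam [_ [_ []]]]] //].
have [[lam upsz]|no_lam] := pselect (exists lam, upsilon_set Gam z lam).
  by right; exists lam.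
left; rewrite sigmaE // subnn; split=> //.
suff -> : upsilon_set Gam z = set0 by rewrite II0; apply: card_eq00.
by apply/seteqP; split=> // lam upsz; apply: no_lam; exists lam.
Qed.
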